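(* A finite Dedekind group is code-perfect if and only if it is isomorphic to either $\mathbb{Z}_4$ or $\mathbb{Z}_2^t\times Q$, where $t\ge 0$ and $Q$ is an abelian group of odd order.
   Context: A Dedekind group is a group all of whose subgroups are normal. For a normal subgroup $H$ of a finite group $G$ with identity $e$, the subgroup sum graph $\Gamma_{G,H}$ is the simple undirected graph with vertex set $G$ in which distinct vertices $x,y$ are adjacent if and only if $xy\in H\setminus\{e\}$. A perfect code in a graph is a set $C$ of vertices that is independent and such that every vertex not in $C$ is adjacent to exactly one vertex of $C$. A finite group $G$ is code-perfect if $\Gamma_{G,H}$ admits a perfect code for every normal subgroup $H$ of $G$. *)

From mathcomp Require Import all_boot all_order all_algebra all_fingroup all_solvable.
Set Implicit Arguments. Unset Strict Implicit. Unset Printing Implicit Defensive.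
Local Open Scope group_scope.

Definition dedekind (gT : finGroupType) (G : {set gT}) : Prop :=
  forall H : {group gT}, H \subset G -> H <| G.

(* Adjacency in the subgroup sum graph Gamma_{G,H} (vertex set G):
   distinct x, y are adjacent iff x*y \in H \ {1}. *)
Definition ssg_adj (gT : finGroupType) (H : {set gT}) (x y : gT) : bool :=
  (x != y) && (x * y \in H :\ 1).

Definition perfect_code (gT : finGroupType) (G H C : {set gT}) : Prop :=
  [/\ C \subset G,
      {in C &, forall x y, ~~ ssg_adj H x y}
    & {in G :\: C, forall x, #|[set y in C | ssg_adj H x y]| = 1%N}].

Definition code_perfect (gT : finGroupType) (G : {set gT}) : Prop :=
  forall H : {group gT}, H <| G -> exists C : {set gT}, perfect_code G H C.

(* For H normal in G, Gamma_{G,H} has a perfect code iff every coset xH with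
   x^2 \in H contains an element of order at most 2, unless |H| <= 2: a code is
   obtained by keeping, from each set xH \cup x^-1 H, one element and its
   inverse, preferring an element of order at most 2.  Z_4 and the groups of
   exponent 2m with m odd satisfy this criterion for every H.
   Conversely let G be Dedekind and code-perfect.  The criterion for H = <[x^2]>
   shows that an element whose order is divisible by 4 has order 4, and then
   the criterion for the subgroups <[w]> and <[x^2]><[e]> forces G = <[x]>.
   Otherwise, since [~ x, y] \in <[x]> :&: <[y]> in a Dedekind group, an
   induction on #[x] + #[y] reduces to a commutator of odd prime order p, which
   is killed by replacing x with some x * w of smaller order, w \in <[y]>; so G is abelian
   with an elementary abelian Sylow 2-subgroup. *)

From mathcomp Require Import all_boot all_order all_algebra all_fingroup all_solvable.
From mathcomp Require Import zify.
Set Implicit Arguments. Unset Strict Implicit. Unset Printing Implicit Defensive.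
Local Open Scope group_scope.

(** * Perfect codes of subgroup sum graphs *)

Lemma card_gt2 (T : finType) (A : {set T}) a b c :
  a \in A -> b \in A -> c \in A -> a != b -> a != c -> b != c -> 2 < #|A|.
Proof.
move=> Aa Ab Ac ab ac bc; apply: leq_trans (subset_leq_card (_ : a |: [set b; c] \subset A)).
  by rewrite cardsU1 cards2 !inE negb_or ab ac bc.
by apply/subsetP => z; rewrite !inE => /or3P[] /eqP->.
Qed.

Definition code_condition (gT : finGroupType) (G H : {set gT}) : Prop :=
  forall x, x \in G -> x ^+ 2 \in H ->
    #|H| <= 2 \/ exists2 h, h \in H & (x * h) ^+ 2 = 1.

Section SubgroupSumGraph.
Variables (gT : finGroupType) (G H : {group gT}).
Hypothesis nsHG : H <| G.

Let nHG x : x \in G -> x \in 'N(H).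
Proof. exact/subsetP/normal_norm. Qed.

Let cosetV x : x \in G -> coset H x^-1 = (coset H x)^-1.
Proof. by move=> Gx; rewrite morphV ?nHG. Qed.

Let cosetM x y : x \in G -> y \in G -> coset H (x * y) = coset H x * coset H y.
Proof. by move=> Gx Gy; rewrite morphM ?nHG. Qed.

Lemma mem_coset_eq1 x : x \in G -> (x \in H) = (coset H x == 1).
Proof. by move=> Gx; apply/idP/eqP; [apply: coset_id | apply: coset_idr (nHG Gx)]. Qed.

Lemma mulg_mem_normal x y : x \in G -> y \in G ->
  (x * y \in H) = (coset H y == (coset H x)^-1).
Proof.
by move=> Gx Gy; rewrite mem_coset_eq1 ?groupM // cosetM // -eq_invg_mul eq_sym.
Qed.

Lemma ssg_adjE x y : x \in G -> y \in G ->
  ssg_adj H x y = [&& x != y, x != y^-1 & coset H y == (coset H x)^-1].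
Proof.
move=> Gx Gy; rewrite /ssg_adj !inE mulg_mem_normal // mulg_eq1.
by case: (x != y); case: (x == y^-1).
Qed.

Definition sym_coset x :=
  [set z in G | (coset H z == coset H x) || (coset H z == (coset H x)^-1)].

Definition code_rep (A : {set gT}) :=
  if [pick z in A | z ^+ 2 == 1] is Some z then z else repr A.

(* Preferring representatives of order at most 2 is what makes the code
   dominate when the condition holds (code_rep_inv_of_adj2). *)
Definition sym_coset_code :=
  [set y in G | (y == code_rep (sym_coset y)) || (y^-1 == code_rep (sym_coset y))].

Lemma sym_coset_id x : x \in G -> x \in sym_coset x.
Proof. by move=> Gx; rewrite inE Gx eqxx. Qed.

Lemma sym_coset_sub x : sym_coset x \subset G.
Proof. by apply/subsetP=> z; rewrite inE => /andP[]. Qed.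

Lemma sym_coset_eq x z : z \in sym_coset x -> sym_coset z = sym_coset x.
Proof.
rewrite inE => /andP[Gz /orP[]/eqP e]; apply/setP=> w; rewrite !inE e //.
by rewrite invgK orbC.
Qed.

Lemma sym_cosetV x z : z \in sym_coset x -> z^-1 \in sym_coset x.
Proof.
rewrite !inE => /andP[Gz e]; rewrite groupV Gz cosetV //=.
by rewrite !eqg_invLR invgK orbC.
Qed.

Lemma code_rep_mem (A : {set gT}) x : x \in A -> code_rep A \in A.
Proof. by rewrite /code_rep; case: pickP => [z /andP[]|_] // /mem_repr. Qed.

Lemma code_rep_sqr (A : {set gT}) z : z \in A -> z ^+ 2 = 1 -> code_rep A ^+ 2 = 1.
Proof.
move=> Az z2; rewrite /code_rep; case: pickP => [y /andP[_ /eqP]|/(_ z)] //.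
by rewrite Az z2 eqxx.
Qed.

Lemma sym_coset_codeP x y :
  y \in sym_coset_code -> y \in sym_coset x ->
  y = code_rep (sym_coset x) \/ y = (code_rep (sym_coset x))^-1.
Proof.
rewrite inE => /andP[_] + yS; rewrite (sym_coset_eq yS) => /orP[]/eqP.
  by left.
by move=> <-; right; rewrite invgK.
Qed.

Section Representative.
Variable x : gT.
Hypothesis Gx : x \in G.
Local Notation r := (code_rep (sym_coset x)).

Lemma code_rep_sym_coset : r \in sym_coset x.
Proof. exact: code_rep_mem (sym_coset_id Gx). Qed.

Lemma code_rep_group : r \in G.
Proof. exact: subsetP (sym_coset_sub x) _ code_rep_sym_coset. Qed.

Lemma code_rep_code : r \in sym_coset_code.
Proof. by rewrite inE code_rep_group (sym_coset_eq code_rep_sym_coset) eqxx. Qed.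

Lemma code_repV_code : r^-1 \in sym_coset_code.
Proof.
rewrite inE groupV code_rep_group (sym_coset_eq (sym_cosetV code_rep_sym_coset)).
by rewrite invgK eqxx orbT.
Qed.

End Representative.

Lemma sym_coset_code_sub : sym_coset_code \subset G.
Proof. by apply/subsetP=> y; rewrite inE => /andP[]. Qed.

Lemma sym_coset_code_indep : {in sym_coset_code &, forall y z, ~~ ssg_adj H y z}.
Proof.
move=> y z Cy Cz; have [Gy Gz] := (subsetP sym_coset_code_sub y Cy,
                                     subsetP sym_coset_code_sub z Cz).
rewrite ssg_adjE //; apply/negP => /and3P[yz yzV e].
have zS : z \in sym_coset y by rewrite inE Gz e orbT.
have [ey|ey] := sym_coset_codeP Cy (sym_coset_id Gy);
  have [ez|ez] := sym_coset_codeP Cz zS;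
  by rewrite ey ez ?invgK eqxx in yz yzV.
Qed.

Lemma perfect_code_meets_sym_coset C x :
  perfect_code G H C -> x \in G -> exists2 c, c \in C & c \in sym_coset x.
Proof.
case=> sCG _ dom Gx; have [Cx|notCx] := boolP (x \in C).
  by exists x; rewrite ?sym_coset_id.
have xGC : x \in G :\: C by rewrite inE notCx.
have /eqP/cards1P[c ec] := dom x xGC.
have /setIdP[Cc] : c \in [set y in C | ssg_adj H x y] by rewrite ec set11.
have Gc := subsetP sCG c Cc; rewrite ssg_adjE // => /and3P[_ _ fc].
by exists c; rewrite // inE Gc fc orbT.
Qed.

Section SelfInverseCoset.
Variables (C : {set gT}) (x : gT).
Hypotheses (codeC : perfect_code G H C) (Gx : x \in G).
Local Notation u := (coset H x).
Hypotheses (uV : u^-1 = u) (noinv : forall z, z \in G -> coset H z = u -> z^-1 != z).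

Let adj a b : a \in G -> b \in G -> coset H a = u -> coset H b = u ->
  a != b -> a != b^-1 -> ssg_adj H a b.
Proof. by move=> Ga Gb fa fb ab abV; rewrite ssg_adjE // ab abV fa fb uV eqxx. Qed.

Lemma perfect_code_cosetV c : c \in C -> coset H c = u -> c^-1 \in C.
Proof.
move=> Cc fc; have [sCG indep dom] := codeC; apply: contraT => notCcV.
have CG y : y \in C -> y \in G by apply: subsetP.
have cVGC : c^-1 \in G :\: C by rewrite inE notCcV groupV CG.
have /eqP/cards1P[d ed] := dom _ cVGC.
have /setIdP[Cd] : d \in [set y in C | ssg_adj H c^-1 y] by rewrite ed set11.
rewrite ssg_adjE ?groupV ?CG // cosetV ?CG // fc invgK => /and3P[cVd cdV /eqP fd].
case/negP: (indep d c Cd Cc); rewrite adj ?CG //.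
  by apply: contraNneq cdV => ->.
by rewrite eq_sym.
Qed.

Lemma perfect_code_coset_card c : c \in C -> coset H c = u -> #|H| <= 2.
Proof.
move=> Cc fc; have [sCG indep dom] := codeC; have Gc := subsetP sCG c Cc.
have CcV := perfect_code_cosetV Cc fc.
rewrite leqNgt; apply/negP => ltH2.
have [h Hh] : exists2 h, h \in H & h \notin [set 1; c^-1 ^+ 2].
  apply/subsetPn; apply: contraTN ltH2 => /subset_leq_card.
  by rewrite cards2 -leqNgt => /leq_trans; apply; rewrite ltnS leq_b1.
rewrite !inE negb_or => /andP[h1 hc].
have Gh : h \in G := subsetP (normal_sub nsHG) h Hh.
have Gch : c * h \in G by rewrite groupM.
have fch : coset H (c * h) = u by rewrite cosetM // (coset_id Hh) mulg1.
have chc : c * h != c by rewrite -{2}(mulg1 c) (inj_eq (mulgI c)).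
have chcV : c * h != c^-1 by apply: contraNneq hc => e; rewrite expg2 -{2}e mulKg.
have notCch : c * h \notin C.
  by apply/negP => Cch; case/negP: (indep _ _ Cch Cc); rewrite adj // invgK eq_sym.
have chGC : c * h \in G :\: C by rewrite inE notCch.
apply/eqP: (dom _ chGC); rewrite neq_ltn; apply/orP; right.
apply: leq_trans (subset_leq_card (_ : [set c; c^-1] \subset _)).
  by rewrite cards2 eq_sym noinv.
apply/subsetP => y; rewrite !inE => /orP[]/eqP->; rewrite ?Cc ?CcV adj ?groupV ?invgK //.
by rewrite cosetV // fc uV.
Qed.

End SelfInverseCoset.

Lemma code_condition_of_perfect_code C : perfect_code G H C -> code_condition G H.
Proof.
move=> codeC x Gx x2H; have [leH2|ltH2] := leqP #|H| 2; [by left | right].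
have [/exists_inP[h Hh /eqP]|noinvH] := boolP [exists h in H, (x * h) ^+ 2 == 1].
  by exists h.
have uV : (coset H x)^-1 = coset H x.
  by apply/eqP; rewrite eq_invg_mul -cosetM // -expg2 -mem_coset_eq1 // groupX.
have noinv z : z \in G -> coset H z = coset H x -> z^-1 != z.
  move=> Gz fz; apply: contra noinvH => /eqP zV; apply/exists_inP; exists (x^-1 * z).
    by rewrite mem_coset_eq1 ?groupM ?groupV // cosetM ?groupV // cosetV // fz mulVg.
  by rewrite mulKVg expg2 -{1}zV mulVg.
have [c Cc] := perfect_code_meets_sym_coset codeC Gx.
rewrite inE uV orbb => /andP[Gc /eqP fc].
by move: ltH2; rewrite ltnNge (perfect_code_coset_card codeC uV noinv Cc fc).
Qed.

Hypothesis condH : code_condition G H.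

Section NonCodeVertex.
Variable x : gT.
Hypotheses (Gx : x \in G) (notCx : x \notin sym_coset_code).
Local Notation r := (code_rep (sym_coset x)).
Local Notation u := (coset H x).

Let Gr : r \in G. Proof. exact: code_rep_group. Qed.
Let xr : x != r.
Proof. by apply: contraNneq notCx => ->; apply: code_rep_code. Qed.

Let xrV : x != r^-1.
Proof. by apply: contraNneq notCx => ->; apply: code_repV_code. Qed.

Lemma code_rep_inv_of_adj2 : coset H r = u^-1 -> coset H r^-1 = u^-1 -> r^-1 = r.
Proof.
move=> fr frV; have [//|rrV] := eqVneq r^-1 r.
have uV : u^-1 = u by rewrite -frV cosetV // fr invgK.
have r2H : r ^+ 2 \in H by rewrite expg2 mulg_mem_normal // fr invgK uV.
case: (condH Gr r2H) => [leH2|[h Hh rh2]].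
  suff : 2 < #|H| by rewrite ltnNge leH2.
  apply: (card_gt2 (group1 H) (_ : x * r \in H) (_ : x * r^-1 \in H)).
  - by rewrite mulg_mem_normal // fr.
  - by rewrite mulg_mem_normal ?groupV // frV.
  - by rewrite eq_sym mulg_eq1.
  - by rewrite eq_sym mulg_eq1 invgK.
  - by rewrite (inj_eq (mulgI x)) eq_sym.
have rhS : r * h \in sym_coset x.
  have Gh := subsetP (normal_sub nsHG) h Hh.
  move: (code_rep_sym_coset Gx); rewrite !inE groupM // cosetM //.
  by rewrite (coset_id Hh) mulg1 Gr.
by apply/eqP; rewrite eq_invg_mul -expg2 (code_rep_sqr rhS rh2).
Qed.

Lemma code_neighboursE :
  [set y in sym_coset_code | ssg_adj H x y] = [set y in [set r; r^-1] | coset H y == u^-1].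
Proof.
have CG y : y \in sym_coset_code -> y \in G by apply: subsetP sym_coset_code_sub y.
apply/setP=> y; apply/setIdP/setIdP => [[Cy]|[ry fy]].
  rewrite (ssg_adjE Gx (CG _ Cy)) => /and3P[_ _ fy]; split=> //.
  have yS : y \in sym_coset x by rewrite inE CG //= fy orbT.
  by case: (sym_coset_codeP Cy yS) => ey; rewrite !inE ey eqxx ?orbT.
rewrite !inE in ry; case/orP: ry => /eqP ey; rewrite ey in fy *; split.
- exact: code_rep_code.
- by rewrite ssg_adjE // xr xrV fy.
- exact: code_repV_code.
- by rewrite ssg_adjE ?groupV // invgK xr xrV fy.
Qed.

Lemma card_code_neighbours : #|[set y in sym_coset_code | ssg_adj H x y]| = 1%N.
Proof.
rewrite code_neighboursE; apply/eqP/cards1P.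
have frV : coset H r^-1 = (coset H r)^-1 := cosetV Gr.
have [fr|nfr] := eqVneq (coset H r) u^-1.
  exists r; apply/setP => y; rewrite !inE.
  have [->|yr] := eqVneq y r; first by rewrite fr eqxx.
  case: eqVneq => [ey|] //=.
  apply/negbTE/eqP => frV'; case/eqP: yr.
  by rewrite ey; apply: code_rep_inv_of_adj2; rewrite -?ey.
have fr : coset H r = u.
  by have := code_rep_sym_coset Gx; rewrite inE (negPf nfr) orbF => /andP[_ /eqP].
exists r^-1; apply/setP => y; rewrite !inE.
have [->|yrV] := eqVneq y r^-1; first by rewrite orbT frV fr eqxx.
by case: eqVneq => [->|] //=; rewrite (negPf nfr).
Qed.

End NonCodeVertex.

Lemma sym_coset_code_dom :
  {in G :\: sym_coset_code, forall x, #|[set y in sym_coset_code | ssg_adj H x y]| = 1%N}.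
Proof. by move=> x /setDP[Gx notCx]; apply: card_code_neighbours. Qed.

Lemma sym_coset_code_perfect : perfect_code G H sym_coset_code.
Proof.
by split; [apply: sym_coset_code_sub | apply: sym_coset_code_indep | apply: sym_coset_code_dom].
Qed.

End SubgroupSumGraph.

Lemma perfect_codeP (gT : finGroupType) (G H : {group gT}) :
  H <| G -> (exists C, perfect_code G H C) <-> code_condition G H.
Proof.
move=> nsHG; split=> [[C codeC] | condH]; first exact: code_condition_of_perfect_code codeC.
by exists (sym_coset_code G H); apply: sym_coset_code_perfect.
Qed.

(** * Groups satisfying the criterion *)

Lemma code_condition_of_exponent (gT : finGroupType) (G H : {group gT}) m :
  odd m -> exponent G %| 2 * m -> code_condition G H.
Proof.
move=> odd_m expG x Gx x2_H; right; exists ((x ^+ 2) ^+ m./2); first exact: groupX.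
have -> : x * (x ^+ 2) ^+ m./2 = x ^+ m.
  by rewrite -expgM -expgS -{2}(odd_double_half m) odd_m mul2n.
by apply/eqP; rewrite -expgM mulnC -order_dvdn (dvdn_trans (dvdn_exponent Gx)).
Qed.

Lemma code_condition_of_card4 (gT : finGroupType) (G H : {group gT}) :
  #|G| = 4 -> H \subset G -> code_condition G H.
Proof.
move=> cardG sHG x Gx _; have [|ltH2] := leqP #|H| 2; [by left | right].
have H4 : #|H| = 4.
  have := cardSg sHG; rewrite cardG => dvdH4.
  by have := dvdn_leq (isT : 0 < 4) dvdH4; move: dvdH4 ltH2; case: #|H| => [|[|[|[|[|n]]]]].
have -> : H :=: G by apply/eqP; rewrite eqEcard sHG cardG H4.
by exists x^-1; rewrite ?groupV // mulgV expg1n.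
Qed.

Lemma exponent_rV_Z2 t : exponent [set: 'rV['Z_2]_t] %| 2.
Proof.
apply/exponentP => v _; rewrite FinRing.zmodXgE; apply/matrixP => i j.
by rewrite mulmxnE !mxE -GRing.mulr_natr pchar_Zp // GRing.mulr0.
Qed.

Lemma exponent_setX_rV_Z2 t (qT : finGroupType) (Q : {group qT}) :
  exponent (setX [set: 'rV['Z_2]_t] Q) %| 2 * #|Q|.
Proof.
rewrite -(dprod_exponent (setX_dprod [set: 'rV['Z_2]_t]%G Q)) dvdn_lcm.
apply/andP; split.
  rewrite -(exponent_isog (isog_setX1 _ [set: 'rV['Z_2]_t]%G)).
  exact: dvdn_trans (exponent_rV_Z2 t) (dvdn_mulr _ _).
rewrite -(exponent_isog (isog_set1X _ Q)).
exact: dvdn_trans (exponent_dvdn Q) (dvdn_mull _ _).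
Qed.

(** * Dedekind groups without elements of order 4 are abelian *)

Lemma dvdn_bin2 p e : odd p -> p %| e -> p %| 'C(e, 2).
Proof.
move=> op pe; have [oe|ee] := boolP (odd e); first by rewrite bin2odd // dvdn_mulr.
have e2 : e = (e./2 * 2)%N by rewrite muln2 -[LHS]odd_double_half (negPf ee).
rewrite bin2 {1}e2 muln2 -doubleMl half_double dvdn_mulr //.
by rewrite -(@Gauss_dvdl _ _ 2) ?coprimen2 // -e2.
Qed.

Lemma commute_in_cycle (gT : finGroupType) (a b z : gT) :
  a \in <[z]> -> b \in <[z]> -> commute a b.
Proof. by move=> az bz; apply: (centsP (cycle_abelian z)). Qed.

Lemma prime_dvd_orderX (gT : finGroupType) (y : gT) p e :
  prime p -> 0 < e -> logn p e < logn p #[y] -> p %| #[y ^+ e].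
Proof.
move=> pp e0 lt_e_y; rewrite orderXgcd; set g := gcdn #[y] e.
have g_y : g %| #[y] := dvdn_gcdl _ _.
have g0 : 0 < g by rewrite gcdn_gt0 order_gt0.
have q0 : 0 < #[y] %/ g by rewrite divn_gt0 // dvdn_leq.
apply: contraLR lt_e_y => ndvd; rewrite -leqNgt -{1}(divnK g_y) lognM //.
by rewrite logn_coprime ?prime_coprime // dvdn_leq_log // dvdn_gcdr.
Qed.

Lemma mem_cycle_of_order_dvd (gT : finGroupType) (y c z : gT) :
  c \in <[y]> -> z \in <[y]> -> #[c] %| #[z] -> c \in <[z]>.
Proof.
move=> cy zy c_z; set a := z ^+ (#[z] %/ #[c]).
have oa : #[a] = #[c] by rewrite orderXdiv ?dvdn_div // divnA // mulKn.
rewrite -cycle_subG (_ : <[c]> = <[a]>) ?cycle_subG ?mem_cycle //.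
apply/eqP; rewrite (eq_subG_cyclic (cycle_cyclic y)) ?cycle_subG ?groupX //.
by rewrite -!orderE oa.
Qed.

Lemma commMg_central (gT : finGroupType) (x w y : gT) :
  commute w y -> commute [~ x, y] w -> [~ x * w, y] = [~ x, y].
Proof. by move=> /commgP/eqP wy /commgP/conjg_fixP cw; rewrite commMgJ wy cw mulg1. Qed.

Section DedekindCommutators.
Variables (gT : finGroupType) (G : {group gT}).
Hypothesis dedG : dedekind G.

Lemma dedekind_commg_in_cycles x y :
  x \in G -> y \in G -> [~ x, y] \in <[x]> :&: <[y]>.
Proof.
move=> Gx Gy; have nG z w : z \in G -> w \in G -> w \in 'N(<[z]>).
  by move=> Gz Gw; apply: (subsetP (normal_norm (dedG _))); rewrite ?cycle_subG.
rewrite inE; apply/andP; split.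
  by rewrite commgEl groupM ?groupV ?cycle_id // memJ_norm ?nG // cycle_id.
by rewrite commgEr groupM ?cycle_id // memJ_norm ?nG // groupV cycle_id.
Qed.

Hypothesis no_order4 : forall z, z \in G -> ~~ (4 %| #[z]).

Lemma dedekind_commg_prime_root x y p e :
  x \in G -> y \in G -> prime p -> #[[~ x, y]] = p -> #[x] = (e * p)%N ->
  x ^+ e \in <[[~ x, y]]> /\ p %| e.
Proof.
move=> Gx Gy pp oc xe; have /setIP[cx cy] := dedekind_commg_in_cycles Gx Gy.
have xc : commute x [~ x, y] := commute_in_cycle (cycle_id x) cx.
have e0 : 0 < e by move: (order_gt0 x); rewrite xe muln_gt0 => /andP[].
have xe_c : x ^+ e \in <[[~ x, y]]>.
  apply: mem_cycle_of_order_dvd (mem_cycle x e) cx _.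
  by rewrite orderXdiv xe ?dvdn_mulr // mulKn // oc.
split=> //; have xe_y : x ^+ e \in <[y]> by apply: subsetP xe_c; rewrite cycle_subG.
by rewrite -oc order_dvdn -commXg //; apply/commgP; apply: commute_in_cycle xe_y (cycle_id y).
Qed.

Lemma dedekind_commg_prime_descent x y p :
  x \in G -> y \in G -> prime p -> #[[~ x, y]] = p -> logn p #[x] <= logn p #[y] ->
  exists x', [/\ x' \in G, #[x'] < #[x] & [~ x', y] = [~ x, y]].
Proof.
move=> Gx Gy pp oc le_xy.
have /setIP[cx cy] := dedekind_commg_in_cycles Gx Gy.
have p_x : p %| #[x] by rewrite -oc order_dvdG.
have [e xe] : {e | #[x] = (e * p)%N} by exists (#[x] %/ p); rewrite divnK.
have e0 : 0 < e by move: (order_gt0 x); rewrite xe muln_gt0 => /andP[].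
have [xe_c p_e] := dedekind_commg_prime_root Gx Gy pp oc xe.
set c := [~ x, y] in oc cx cy xe_c *.
have odd_p : odd p.
  apply: contraR (no_order4 Gx) => /(prime_oddPn pp) p2.
  by rewrite xe p2 -[4]/(2 * 2)%N dvdn_pmul2r // -p2.
have c_ye : c \in <[y ^+ e]>.
  apply: mem_cycle_of_order_dvd cy (mem_cycle y e) _; rewrite oc prime_dvd_orderX //.
  by apply: leq_trans le_xy; rewrite xe lognM ?(prime_gt0 pp) // (logn_prime _ pp) eqxx addn1.
have /cycleP[k ek] : (x ^+ e)^-1 \in <[y ^+ e]>.
  by rewrite groupV; apply: subsetP xe_c; rewrite cycle_subG.
set w := y ^+ k.
have w_y : w \in <[y]> := mem_cycle y k.
have wx_c : [~ w, x] \in <[c]>.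
  have yx_c : [~ y, x] \in <[c]> by rewrite -invgR groupV cycle_id.
  rewrite commXg ?groupX //.
  by apply: commute_in_cycle (cycle_id y) _; apply: subsetP yx_c; rewrite cycle_subG.
(* (x w)^e = x^e w^e [~ w, x]^'C(e, 2), where w^e = x^-e and p, being odd,
   divides 'C(e, 2). *)
have xw_e : (x * w) ^+ e = 1.
  have [wx_x wx_y] : [~ w, x] \in <[x]> /\ [~ w, x] \in <[y]>.
    by split; apply: subsetP wx_c; rewrite cycle_subG.
  have w_wx : commute w [~ w, x] := commute_in_cycle w_y wx_y.
  have x_wx : commute x [~ w, x] := commute_in_cycle (cycle_id x) wx_x.
  rewrite expMg_Rmul //.
  rewrite /w -expgM mulnC expgM -ek mulgV mul1g; apply/eqP; rewrite -order_dvdn.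
  by apply: dvdn_trans (dvdn_bin2 odd_p p_e); rewrite -oc order_dvdG.
exists (x * w); split; first by rewrite groupM ?groupX.
  have xw_le_e : #[x * w] <= e by rewrite dvdn_leq // order_dvdn xw_e.
  by rewrite (leq_ltn_trans xw_le_e) // xe -{1}(muln1 e) ltn_pmul2l // prime_gt1.
apply: commMg_central; first exact: commute_in_cycle w_y (cycle_id y).
exact: commute_in_cycle cy w_y.
Qed.

Lemma dedekind_abelian_no_order4 : abelian G.
Proof.
suff commG n x y : x \in G -> y \in G -> #[x] + #[y] <= n -> [~ x, y] = 1.
  by apply/centsP => x Gx y Gy; apply/commgP/eqP/(commG _ x y).
elim: n x y => [|n IHn] x y Gx Gy le_n.
  by move: le_n; rewrite leqn0 addn_eq0 -!leqn0 leqNgt order_gt0.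
apply/eqP; apply: contraT => nc; set c := [~ x, y] in nc.
have /setIP[cx _] := dedekind_commg_in_cycles Gx Gy.
have xc : commute x c := commute_in_cycle (cycle_id x) cx.
have pp : prime (pdiv #[c]) by rewrite pdiv_prime // order_gt1.
set p := pdiv #[c] in pp; set m := #[c] %/ p.
have oc1 : #[[~ x ^+ m, y]] = p.
  rewrite commXg // orderXdiv ?dvdn_div ?pdiv_dvd //.
  by rewrite divnA ?pdiv_dvd // mulKn.
have commg_neq1 (z1 z2 : gT) : #[[~ z1, z2]] = p -> [~ z1, z2] != 1.
  by move=> oz; apply: contraTneq (prime_gt1 pp) => e1; rewrite -oz e1 order1.
have Gx1 : x ^+ m \in G by rewrite groupX.
have le_x1 : #[x ^+ m] <= #[x] := dvdn_leq (order_gt0 x) (orderXdvd x m).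
case: (leqP (logn p #[x ^+ m]) (logn p #[y])) => [le_p | /ltnW le_p].
  have [x' [Gx' lt_x' ex']] := dedekind_commg_prime_descent Gx1 Gy pp oc1 le_p.
  have := commg_neq1 _ _ oc1; rewrite -ex' IHn ?eqxx //.
  by rewrite -ltnS (leq_trans _ le_n) // -addSn leq_add // (leq_trans lt_x').
have oc2 : #[[~ y, x ^+ m]] = p by rewrite -invgR orderV.
have [y' [Gy' lt_y' ey']] := dedekind_commg_prime_descent Gy Gx1 pp oc2 le_p.
have := commg_neq1 _ _ oc2; rewrite -ey' IHn ?eqxx //.
by rewrite -ltnS (leq_trans _ le_n) // addnC -addnS leq_add.
Qed.

End DedekindCommutators.

(** * Dedekind groups with an element of order 4 *)

Section CyclicOfOrder4.
Variables (gT : finGroupType) (x : gT).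
Hypothesis ox : #[x] = 4.

Lemma order4_sqr_neq1 : x ^+ 2 != 1.
Proof. by rewrite -order_dvdn ox. Qed.

Lemma cycle4_sqr_mem y : y \in <[x]> -> y != 1 -> x ^+ 2 \in <[y]>.
Proof.
case/cycleP => k ->; rewrite -(expg_mod_order x k) ox.
have : k %% 4 < 4 by rewrite ltn_mod.
case: (k %% 4) => [|[|[|[|n]]]] //= _; rewrite ?eqxx // => _.
- by rewrite expg1 mem_cycle.
- exact: cycle_id.
suff -> : x ^+ 2 = (x ^+ 3) ^+ 2 by apply: mem_cycle.
by rewrite -expgM -(expg_mod_order x (3 * 2)) ox.
Qed.

End CyclicOfOrder4.

Section DedekindCodeCondition.
Variables (gT : finGroupType) (G : {group gT}).
Hypothesis condG : forall H : {group gT}, H \subset G -> code_condition G H.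

Lemma order4_of_dvd x : x \in G -> 4 %| #[x] -> #[x] = 4.
Proof.
move=> Gx x4; have x0 := order_gt0 x.
have x2_G : <[x ^+ 2]> \subset G by rewrite cycle_subG groupX.
case: (condG x2_G Gx (cycle_id _)) => [|[h /cycleP[i ->]]].
  by rewrite -orderE orderXdiv ?(dvdn_trans _ x4) //; move: x4 x0; clear; lia.
rewrite -expgM -expgS -expgM mulnC => /eqP; rewrite -order_dvdn => /(dvdn_trans x4).
by clear; lia.
Qed.

Hypothesis dedG : dedekind G.
Variable x : gT.
Hypotheses (Gx : x \in G) (ox : #[x] = 4).

Lemma dedekind_cycle4_meet e : e \in G -> e != 1 -> <[e]> :&: <[x]> != 1.
Proof.
move=> Ge e1; apply/eqP => ex_1.
have xe : commute x e.
  by apply/commgP; have := dedekind_commg_in_cycles dedG Gx Ge; rewrite setIC ex_1 => /set1P->.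
have e_x : e \notin <[x]>.
  apply: contra e1 => e_x; have : e \in <[e]> :&: <[x]> by rewrite inE cycle_id.
  by rewrite ex_1 => /set1P->.
set H := (<[x ^+ 2]> <*> <[e]>)%G.
have HE : H :=: <[x ^+ 2]> * <[e]>.
  by rewrite /= cent_joinEl // cycle_subG; apply/centP => _ /cycleP[j ->]; apply: commuteX2.
have H_G : H \subset G by rewrite join_subG !cycle_subG Ge groupX.
have x2_H : x ^+ 2 \in H.
  by rewrite HE; apply/mulsgP; exists (x ^+ 2) 1; rewrite ?cycle_id ?group1 ?mulg1.
case: (condG H_G Gx x2_H) => [leH2|[h]].
  have e_H : e \in H.
    by rewrite HE; apply/mulsgP; exists 1 e; rewrite ?cycle_id ?group1 ?mul1g.
  have x2e : x ^+ 2 != e by apply: contraNneq e_x => <-; rewrite mem_cycle.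
  have x2_1 : 1 != x ^+ 2 by rewrite eq_sym order4_sqr_neq1.
  by move: leH2; rewrite leqNgt (card_gt2 (group1 H) x2_H e_H) // eq_sym.
rewrite HE => /mulsgP[_ _ /cycleP[i ->] /cycleP[j ->] ->].
rewrite mulgA -expgM -expgS expgMn; last exact: commuteX2.
move/eqP; rewrite mulg_eq1 => /eqP x_e.
have : x ^+ (2 * i).+1 ^+ 2 \in <[e]> :&: <[x]>.
  by rewrite inE {1}x_e groupV !groupX ?cycle_id.
rewrite ex_1 => /set1P/eqP; rewrite -expgM -order_dvdn ox.
by clear; lia.
Qed.

Lemma dedekind_cycle4_sqr_mem e : e \in G -> e != 1 -> x ^+ 2 \in <[e]>.
Proof.
move=> Ge e1; have /trivgPn[z /setIP[z_e z_x] z1] := dedekind_cycle4_meet Ge e1.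
by apply: subsetP (cycle4_sqr_mem ox z_x z1); rewrite cycle_subG.
Qed.

Lemma dedekind_cycle4_eq : G :=: <[x]>.
Proof.
apply/eqP; rewrite eqEsubset cycle_subG Gx andbT; apply/subsetP => w Gw.
apply: contraT => w_x; have w1 : w != 1 by apply: contraNneq w_x => ->; apply: group1.
have x2_w := dedekind_cycle4_sqr_mem Gw w1.
have x_w : x \in <[w]>.
  have w_G : <[w]> \subset G by rewrite cycle_subG.
  case: (condG w_G Gx x2_w) => [le_w2|[h h_w xh2]].
    have w_x2 : w != x ^+ 2 by apply: contraNneq w_x => ->; apply: mem_cycle.
    have x2_1 : 1 != x ^+ 2 by rewrite eq_sym order4_sqr_neq1.
    by move: le_w2; rewrite leqNgt (card_gt2 (group1 _) (cycle_id w) x2_w) // eq_sym.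
  have Gh : h \in G by apply: subsetP h_w; rewrite cycle_subG.
  have [/eqP|xh1] := eqVneq (x * h) 1; first by rewrite mulg_eq1 => /eqP->; rewrite groupV.
  suff /mulgI xh : x * x = x * h by rewrite xh.
  case/cycleP: (dedekind_cycle4_sqr_mem (groupM Gx Gh) xh1) => k.
  rewrite -(expg_mod k xh2) modn2 -expg2; case: (odd k) => //= x2_1.
  by case/eqP: (order4_sqr_neq1 ox).
have /(order4_of_dvd Gw) ow : 4 %| #[w] by rewrite -ox order_dvdG.
suff xw : <[x]> = <[w]> by rewrite xw cycle_id in w_x.
by apply/eqP; rewrite eqEcard cycle_subG x_w -!orderE ox ow.
Qed.

End DedekindCodeCondition.

Lemma abelian_no_order4_isog (gT : finGroupType) (G : {group gT}) :
  abelian G -> (forall z, z \in G -> ~~ (4 %| #[z])) ->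
  exists (t : nat) (qT : finGroupType) (Q : {group qT}),
    [/\ abelian Q, odd #|Q| & G \isog setX [set: 'rV['Z_2]_t] Q].
Proof.
move=> abG no_order4; set P := 'O_2(G); set t := logn 2 #|P|.
have abelemP : 2.-abelem P.
  apply/exponent2_abelem/exponentP => z Pz; apply/eqP; rewrite -order_dvdn.
  have Gz : z \in G := subsetP (pcore_sub _ _) z Pz.
  have /p_natP[k oz] := mem_p_elt (pcore_pgroup 2 G) Pz.
  move: (no_order4 z Gz); rewrite oz; case: k {oz} => [|[|k]] //.
  by rewrite !expnS mulnA dvdn_mulr.
exists t, gT, 'O_2^'(G)%G; split.
- exact: abelianS (pcore_sub _ _) abG.
- by rewrite odd_2'nat; apply: pcore_pgroup.
apply: isog_dprod (nilpotent_pcoreC 2 (abelian_nil abG)) (setX_dprod [set: 'rV['Z_2]_t]%G _) _ _.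
  apply: isog_trans (isog_setX1 _ _).
  rewrite (isog_abelem_card _ abelemP) exponent2_abelem ?exponent_rV_Z2 //=.
  by rewrite cardsT card_mx card_ord mul1n -card_pgroup // pcore_pgroup.
exact: isog_set1X.
Qed.

Lemma dedekind_code_condition_isog (gT : finGroupType) (G : {group gT}) :
  dedekind G -> (forall H : {group gT}, H \subset G -> code_condition G H) ->
  G \isog Zp 4
  \/ exists (t : nat) (qT : finGroupType) (Q : {group qT}),
        [/\ abelian Q, odd #|Q| & G \isog setX [set: 'rV['Z_2]_t] Q].
Proof.
move=> dedG condG.
have [/exists_inP[x Gx /eqP ox] | no_x4] := boolP [exists x in G, #[x] == 4].
  left; rewrite (dedekind_cycle4_eq condG dedG Gx ox).
  rewrite (isog_cyclic_card _ (cycle_cyclic x)) card_Zp // -orderE ox eqxx andbT.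
  by apply/cyclicP; exists Zp1; rewrite -Zp_cycle.
have no_order4 z : z \in G -> ~~ (4 %| #[z]).
  move=> Gz; apply: contra no_x4 => /(order4_of_dvd condG Gz) oz.
  by apply/exists_inP; exists z; rewrite // oz.
right; apply: (abelian_no_order4_isog _ no_order4).
exact: dedekind_abelian_no_order4 dedG no_order4.
Qed.

Theorem theorem4p5 (gT : finGroupType) (G : {group gT}) :
  dedekind G ->
  (code_perfect G <->
     (G \isog Zp 4
      \/ exists (t : nat) (qT : finGroupType) (Q : {group qT}),
           [/\ abelian Q, odd #|Q| & G \isog setX [set: 'rV['Z_2]_t] Q])).
Proof.
move=> dedG; split=> [codeG | isoG H nsHG].
  apply: dedekind_code_condition_isog => // H sHG.
  by have nsHG := dedG H sHG; apply/(perfect_codeP nsHG)/codeG.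
apply/(perfect_codeP nsHG); case: isoG => [isoG | [t [qT [Q [_ oddQ isoG]]]]].
  by apply: code_condition_of_card4 (normal_sub nsHG); rewrite (card_isog isoG) card_Zp.
apply: code_condition_of_exponent oddQ _.
by rewrite (exponent_isog isoG) exponent_setX_rV_Z2.
Qed.
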